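(* Let $P,Q\subseteq[n]$ be disjoint subsets, let $1\le k\le n$, and let $A\subseteq[n]$ be chosen uniformly at random among all subsets of size $k$. Then: (1) if $|P|\ge|Q|$ then $\mathbb{P}[|A\cap P|\ge|A\cap Q|]\ge\frac12$; (2) for all $s,t$, the events $\{|A\cap P|\ge s\}$ and $\{|A\cap Q|\le t\}$ are positively correlated, i.e. $\mathbb{P}[|A\cap P|\ge s\text{ and }|A\cap Q|\le t]\ge\mathbb{P}[|A\cap P|\ge s]\cdot\mathbb{P}[|A\cap Q|\le t]$. *)

(* [n] = 'I_n; A uniform among k-subsets of 'I_n. *)
From mathcomp Require Import all_boot all_order all_algebra.
Set Implicit Arguments. Unset Strict Implicit. Unset Printing Implicit Defensive.
Import GRing.Theory Num.Theory.
Local Open Scope ring_scope.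

Definition ksubsets (n k : nat) : {set {set 'I_n}} := [set A : {set 'I_n} | #|A| == k].

Definition prob_unif (n k : nat) (E : pred {set 'I_n}) : rat :=
  (#|[set A in ksubsets n k | E A]|%:R) / (#|ksubsets n k|%:R).
Arguments prob_unif n k E : clear implicits.
Arguments ksubsets n k : clear implicits.

From mathcomp Require Import all_boot all_order all_algebra perm.
From mathcomp Require Import zify lra.
Import GRing.Theory Num.Theory.
Set Implicit Arguments. Unset Strict Implicit. Unset Printing Implicit Defensive.

(* (1) A permutation exchanging Q with part of P maps every k-set A with
   |A ∩ P| < |A ∩ Q| injectively to a k-set with |A ∩ Q| <= |A ∩ P|.
   (2) Given its trace S = A ∩ Q, the set A \ Q is a uniform
   (k - |S|)-subset of the complement of Q.  Double counting shows that the
   number h(j) of j-subsets C of ~Q with |C ∩ P| >= s satisfies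
   h(j) (m - j) <= h(j+1) (j+1), since this family is upward closed; hence
   h(j) / C(m, j) is nondecreasing and the conditional probability of
   |A ∩ P| >= s decreases with |S|.  A Chebyshev-type sum inequality turns this
   monotonicity into the positive correlation. *)

Lemma exists_perm_swap (T : finType) (P Q : {set T}) :
  [disjoint P & Q] -> #|Q| <= #|P| ->
  exists s : {perm T}, [/\ perm_on (P :|: Q) s,
    forall x, x \in Q -> s x \in P & forall x, s x \in Q -> x \in P].
Proof.
move: {2}#|Q| (erefl #|Q|) => m; elim: m P Q => [|m IH] P Q cardQ dPQ leQP.
  by exists 1%g; rewrite (cards0_eq cardQ); split=> [|x|x]; rewrite ?perm_on1 ?inE.
have /card_gt0P[x xQ] : 0 < #|Q| by rewrite cardQ.
have /card_gt0P[y yP] : 0 < #|P| by rewrite (leq_trans _ leQP) ?cardQ.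
have xP := disjointFl dPQ xQ; have yQ := disjointFr dPQ yP.
have [|||s' [s'_on s'QP s'VQP]] := IH (P :\ y) (Q :\ x).
- by move: cardQ; rewrite (cardsD1 x Q) xQ => -[].
- exact: disjointW (subD1set P y) (subD1set Q x) dPQ.
- by move: leQP; rewrite (cardsD1 x Q) (cardsD1 y P) xQ yP.
have s'_fix z : z \notin (P :\ y) :|: (Q :\ x) -> s' z = z by apply: out_perm.
have s'x : s' x = x by rewrite s'_fix // !inE xP eqxx andbF.
have s'y : s' y = y by rewrite s'_fix // !inE yQ eqxx andbF.
exists (tperm x y * s')%g; split=> [|z zQ|z]; rewrite ?permM.
- apply: perm_onM; first apply: subset_trans (tperm_on x y) _.
    by rewrite subUset !sub1set !inE xQ yP orbT.
  by apply: subset_trans s'_on _; rewrite setUSS ?subD1set.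
- case: tpermP => [_|zy|zx zy]; first by rewrite s'y.
    by rewrite -zy zQ in yQ.
  have zQx : z \in Q :\ x by rewrite !inE zQ andbT; apply/eqP.
  by case/setD1P: (s'QP z zQx).
case: (eqVneq (s' (tperm x y z)) x) => [|s'zx s'zQ].
  by rewrite -{2}s'x => /perm_inj/(canRL (tpermK x y)); rewrite tpermL => ->.
have /s'VQP/setD1P[tzy tzP] : s' (tperm x y z) \in Q :\ x by rewrite !inE s'zx.
by case: tpermP tzy tzP => [_|->|_ _]; rewrite ?eqxx.
Qed.

Lemma card_ksubsets_le_double (T : finType) (P Q : {set T}) k :
  [disjoint P & Q] -> #|Q| <= #|P| ->
  #|[set A : {set T} | #|A| == k]|
  <= 2 * #|[set A : {set T} | (#|A| == k) && (#|A :&: Q| <= #|A :&: P|)]|.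
Proof.
move=> dPQ leQP; have [s [_ sQP sVQP]] := exists_perm_swap dPQ leQP.
set G := [set A | _ && _].
set B := [set A : {set T} | (#|A| == k) && (#|A :&: P| < #|A :&: Q|)].
have -> : #|[set A : {set T} | #|A| == k]| = #|G| + #|B|.
  rewrite -(cardsID G) (setIidPr _); last by apply/subsetP => A; rewrite !inE => /andP[].
  congr (_ + _); apply: eq_card => A; rewrite !inE ltnNge.
  by case: (#|A| == k); rewrite ?andbT.
suff : #|B| <= #|G| by rewrite mul2n -addnn leq_add2l.
have meetQ_le (A : {set T}) : #|A :&: Q| <= #|s @: A :&: P|.
  rewrite -(card_imset _ (@perm_inj _ s)); apply/subset_leq_card/subsetP => y.
  by case/imsetP=> x /setIP[xA xQ] ->; rewrite inE imset_f ?sQP.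
have meetQ_perm_le (A : {set T}) : #|s @: A :&: Q| <= #|A :&: P|.
  rewrite -[leqRHS](card_imset _ (@perm_inj _ s)); apply/subset_leq_card/subsetP => y.
  by case/setIP=> /imsetP[x xA ->] sxQ; rewrite imset_f // inE xA sVQP.
rewrite -(card_imset _ (imset_inj (@perm_inj _ s))); apply/subset_leq_card/subsetP.
move=> y /imsetP[A]; rewrite inE => /andP[/eqP cardA ltPQ] ->.
rewrite inE card_imset ?cardA ?eqxx //=; last exact: perm_inj.
exact: leq_trans (meetQ_perm_le A) (leq_trans (ltnW ltPQ) (meetQ_le A)).
Qed.

Lemma card_setX_dep (T1 T2 : finType) (X : {set T1}) (Y : T1 -> {set T2}) :
  #|[set p : T1 * T2 | (p.1 \in X) && (p.2 \in Y p.1)]| = \sum_(x in X) #|Y x|.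
Proof.
rewrite -sum1_card (eq_bigl (fun p : T1 * T2 => (p.1 \in X) && (p.2 \in Y p.1))).
  rewrite -(pair_big_dep (mem X) (fun x y => y \in Y x) (fun _ _ => 1)).
  by apply: eq_bigr => x _; apply: sum1_card.
by move=> p; rewrite inE.
Qed.

Section Layers.
Variables (T : finType) (R : {set T}) (F : pred {set T}).

Definition layer j := [set C : {set T} | [&& C \subset R, #|C| == j & F C]].

Lemma card_layer_flags j :
  #|[set p : {set T} * T | (p.1 \in layer j) && (p.2 \in p.1)]| = #|layer j| * j.
Proof.
rewrite (card_setX_dep _ id) -sum_nat_const; apply: eq_bigr => C.
by rewrite inE => /and3P[_ /eqP].
Qed.

Lemma card_layer_extensions j :
  #|[set p : {set T} * T | (p.1 \in layer j) && (p.2 \in R :\: p.1)]|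
  = #|layer j| * (#|R| - j).
Proof.
rewrite (card_setX_dep _ (setD R)) -sum_nat_const; apply: eq_bigr => C.
by rewrite inE => /and3P[CR /eqP cardC _]; rewrite cardsD (setIidPr CR) cardC.
Qed.

Hypothesis F_up : forall C D : {set T}, C \subset D -> F C -> F D.

Lemma card_layer_shadow j : #|layer j| * (#|R| - j) <= #|layer j.+1| * j.+1.
Proof.
rewrite -card_layer_extensions -card_layer_flags.
pose add (p : {set T} * T) := (p.2 |: p.1, p.2).
have add_inj : {in [set p | (p.1 \in layer j) && (p.2 \in R :\: p.1)] &, injective add}.
  move=> [C x] [D y]; rewrite !inE /= => /andP[_ /andP[xC _]] /andP[_ /andP[yD _]] [eCD exy].
  by subst y; rewrite -(setU1K xC) -(setU1K yD) eCD.
rewrite -(card_in_imset add_inj); apply/subset_leq_card/subsetP => q /imsetP[[C x]].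
rewrite !inE /= => /andP[/and3P[CR /eqP cardC FC] /andP[xC xR]] ->.
by rewrite setU11 cardsU1 xC cardC subUset sub1set xR CR (F_up (subsetUr _ _) FC) add1n eqxx.
Qed.

Lemma layer_binomial_ratio j :
  #|layer j| * 'C(#|R|, j.+1) <= #|layer j.+1| * 'C(#|R|, j).
Proof.
have binS : 'C(#|R|, j.+1) * j.+1 = (#|R| - j) * 'C(#|R|, j).
  by rewrite mulnC -mul_bin_diag mul_bin_down.
rewrite -(leq_pmul2r (ltn0Sn j)) -mulnA binS mulnA [leqRHS]mulnAC.
by rewrite leq_mul2r card_layer_shadow orbT.
Qed.

Lemma layer_binomial_ratio_mono i j : i <= j ->
  #|layer i| * 'C(#|R|, j) <= #|layer j| * 'C(#|R|, i).
Proof.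
move/subnK <-; elim: (j - i) => [|d IH]; first by rewrite mulnC.
rewrite addSn; set j' := d + i in IH *.
have [Cj0 | Cj_gt0] := posnP 'C(#|R|, j').
  have /bin_small-> : #|R| < j'.+1 by apply: leqW; rewrite ltnNge -bin_gt0 Cj0.
  by rewrite muln0.
rewrite -(leq_pmul2r Cj_gt0).
have step := leq_mul (layer_binomial_ratio j') (leqnn 'C(#|R|, i)).
have prev := leq_mul IH (leqnn 'C(#|R|, j'.+1)).
nia.
Qed.

End Layers.

Lemma sum_mul_split_le (I : finType) (p : pred I) (a b : I -> nat) :
  (forall i j, p i -> ~~ p j -> a j * b i <= a i * b j) ->
  (\sum_i a i) * (\sum_(i | p i) b i) <= (\sum_i b i) * (\sum_(i | p i) a i).
Proof.
move=> cross; rewrite [\sum_i a i](bigID p) [\sum_i b i](bigID p) /= !mulnDl.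
rewrite [X in _ <= X + _]mulnC leq_add2l !big_distrlr /=.
apply: leq_sum => j npj; apply: leq_sum => i pi.
by rewrite [leqRHS]mulnC cross.
Qed.

Section MeetFibers.
Variables (T : finType) (P Q : {set T}) (k : nat).
Hypothesis dPQ : [disjoint P & Q].

Definition fiber s S :=
  [set A : {set T} | [&& #|A| == k, s <= #|A :&: P| & A :&: Q == S]].

Lemma card_ksubsets_by_meet s (c : pred nat) :
  #|[set A : {set T} | [&& #|A| == k, s <= #|A :&: P| & c #|A :&: Q|]]|
  = \sum_(S : {set T} | c #|S|) #|fiber s S|.
Proof.
rewrite -sum1_card (partition_big (fun A => A :&: Q) (fun S : {set T} => c #|S|)) => [|A].
  apply: eq_bigr => S cS; rewrite -sum1_card; apply: eq_bigl => A.
  rewrite !inE; case: (eqVneq (A :&: Q) S) => [->|_]; first by rewrite cS !andbT.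
  by rewrite !andbF.
by rewrite inE => /and3P[_ _].
Qed.

Lemma card_fiber s S : #|fiber s S| =
  if (S \subset Q) && (#|S| <= k)
  then #|layer (~: Q) (fun C => s <= #|C :&: P|) (k - #|S|)| else 0.
Proof.
case: ifPn => [/andP[SQ leSk] | bad]; last first.
  apply: eq_card0 => A; rewrite !inE; apply: contraNF bad => /and3P[/eqP cardA _ /eqP <-].
  by rewrite subsetIr -cardA subset_leq_card ?subsetIl.
set L := layer _ _ _.
have PQc : P \subset ~: Q by rewrite -disjoints_subset.
have dSP : [disjoint S & P] by rewrite (disjointWl SQ) // disjoint_sym.
have dCQ C : C \in L -> [disjoint C & Q] by rewrite inE disjoints_subset => /and3P[].
have add_can : {in L, cancel (fun C => S :|: C) (fun A => A :\: Q)}.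
  move=> C /dCQ dCQ'; rewrite setDUl (setDidPl dCQ').
  have /eqP-> : S :\: Q == set0 by rewrite setD_eq0.
  by rewrite set0U.
rewrite -(card_in_imset (can_in_inj add_can)); apply: eq_card => A; rewrite inE.
apply/idP/imsetP => [/and3P[/eqP cardA leAP /eqP AQ] | [C LC ->]].
  exists (A :\: Q); last by rewrite -AQ setID.
  rewrite inE cardsD cardA AQ eqxx setDE subsetIr /=.
  by rewrite -setIA (setIidPr PQc).
move: (LC) (dCQ C LC); rewrite inE => /and3P[_ /eqP cardC leCP] dCQ'.
have /eqP SC0 : S :&: C == set0 by rewrite setI_eq0 (disjointWl SQ) // disjoint_sym.
have /eqP SP0 : S :&: P == set0 by rewrite setI_eq0.
have /eqP CQ0 : C :&: Q == set0 by rewrite setI_eq0.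
rewrite cardsU SC0 cards0 subn0 cardC subnKC // eqxx setIUl SP0 set0U leCP.
by rewrite setIUl CQ0 setU0 (setIidPl SQ) eqxx.
Qed.

Lemma card_fiber_cross s (S S' : {set T}) : #|S| <= #|S'| ->
  #|fiber s S'| * #|fiber 0 S| <= #|fiber s S| * #|fiber 0 S'|.
Proof.
move=> leSS'; rewrite !card_fiber.
have [_ | _] := boolP ((S' \subset Q) && (#|S'| <= k)); last by rewrite mul0n.
have [_ | _] := boolP ((S \subset Q) && (#|S| <= k)); last by rewrite muln0.
have card_layer_all j : #|layer (~: Q) (fun C => 0 <= #|C :&: P|) j| = 'C(#|~: Q|, j).
  by rewrite -cards_draws; apply: eq_card => C; rewrite !inE leq0n andbT.
rewrite !card_layer_all.
apply: layer_binomial_ratio_mono (leq_sub2l k leSS') => C D CD.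
by move/leq_trans; apply; apply/subset_leq_card/setSI.
Qed.

Lemma ksubsets_meet_correlation s t :
  #|[set A : {set T} | (#|A| == k) && (s <= #|A :&: P|)]|
    * #|[set A : {set T} | (#|A| == k) && (#|A :&: Q| <= t)]|
  <= #|[set A : {set T} | #|A| == k]|
    * #|[set A : {set T} | [&& #|A| == k, s <= #|A :&: P| & #|A :&: Q| <= t]]|.
Proof.
have cardE s' c (E : pred {set T}) :
    (forall A, E A = [&& #|A| == k, s' <= #|A :&: P| & c #|A :&: Q|]) ->
  #|[set A | E A]| = \sum_(S : {set T} | c #|S|) #|fiber s' S|.
  by move=> eE; rewrite -card_ksubsets_by_meet; apply: eq_card => A; rewrite !inE eE.
rewrite (cardE s predT) => [|A]; last by rewrite andbT.
rewrite (cardE 0 (fun y => y <= t)) => [|A]; last by rewrite leq0n.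
rewrite (cardE 0 predT) => [|A]; last by rewrite leq0n andbT.
rewrite (cardE s (fun y => y <= t)) => [|//].
apply: sum_mul_split_le => S S' leSt /negbTE ltS't; apply: card_fiber_cross.
by rewrite ltnW // (leq_ltn_trans leSt) // ltnNge ltS't.
Qed.

End MeetFibers.

Local Open Scope ring_scope.

Lemma prob_unifE n k (E : pred {set 'I_n}) : prob_unif n k E =
  #|[set A : {set 'I_n} | (#|A| == k) && E A]|%:R / #|[set A : {set 'I_n} | #|A| == k]|%:R.
Proof. by rewrite /prob_unif; congr (_%:R / _); apply: eq_card => A; rewrite !inE. Qed.

Lemma half_le_ratio (a N : nat) : (0 < N)%N -> (N <= 2 * a)%N ->
  1 / 2 <= a%:R / N%:R :> rat.
Proof.
move=> N_gt0; rewrite -(ler_nat rat) natrM => le2a.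
by rewrite ler_pdivlMr ?ltr0n //; lra.
Qed.

Lemma ratio_mul_le (a b c N : nat) : (a * b <= N * c)%N ->
  a%:R / N%:R * (b%:R / N%:R) <= c%:R / N%:R :> rat.
Proof.
move=> le_ab; have [-> | N_gt0] := posnP N; first by rewrite invr0 !mulr0.
have N_neq0 : N%:R != 0 :> rat by rewrite pnatr_eq0 -lt0n.
rewrite mulrACA -invfM -natrM ler_pdivrMr ?mulr_gt0 ?ltr0n //.
by rewrite mulrA divfK // -natrM ler_nat (mulnC c).
Qed.

Theorem lemma2p8 (n k : nat) (P Q : {set 'I_n})
  (hdisj : [disjoint P & Q]) (hk1 : (1 <= k)%N) (hkn : (k <= n)%N) :
  ((#|Q| <= #|P|)%N ->
     1 / 2 <= prob_unif n k (fun A => #|A :&: Q| <= #|A :&: P|)%N)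
  /\
  (forall s t : nat,
     prob_unif n k (fun A => s <= #|A :&: P|)%N
       * prob_unif n k (fun A => #|A :&: Q| <= t)%N
     <= prob_unif n k (fun A => (s <= #|A :&: P|) && (#|A :&: Q| <= t))%N).
Proof.
have N_gt0 : (0 < #|[set A : {set 'I_n} | #|A| == k]|)%N.
  by rewrite card_draws card_ord bin_gt0.
split=> [leQP | s t]; rewrite !prob_unifE.
  exact: half_le_ratio N_gt0 (card_ksubsets_le_double k hdisj leQP).
exact: ratio_mul_le (ksubsets_meet_correlation k hdisj s t).
Qed.
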